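(* Let $\mathcal V=\{v^{(1)},\dots,v^{(p)}\}\subset(\mathbb{R}\cup\{-\infty\})^n$, none identically $-\infty$, let $V$ be the matrix with columns $v^{(k)}$, with no row identically $-\infty$, and let $E=\{(i,k):V_{ik}\neq-\infty\}$. Let $$T_i(x)=\inf_{k\in[p],\,(i,k)\in E}\Big[-V_{ik}+\max_{j\in[n],\,j\neq i}(V_{jk}+x_j)\Big],\qquad i\in[n].$$ Let $a\in\mathbb{R}^n$ satisfy $T(a)=-\operatorname{inrad}(\mathcal V)+a$, and let $\sigma:[n]\to[p]$ be a map such that $(i,\sigma(i))\in E$ for all $i\in[n]$. Define $T^\sigma_i(x)=-V_{i\sigma(i)}+\max_{j\in[n],\,j\neq i}(V_{j\sigma(i)}+x_j)$. Then $T(a)=T^\sigma(a)$ if and only if for every $i\in[n]$, the column $V_{\cdot\sigma(i)}$ belongs to the sector $S_i(a)$ and satisfies $\operatorname{dist}_H(V_{\cdot\sigma(i)},\mathcal H_a)=\operatorname{dist}_H(\mathcal V,\mathcal H_a)$.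
   Context: $\mathbb{R}_{\max}=\mathbb{R}\cup\{-\infty\}$, $-\infty+c=-\infty$, $\max\emptyset=-\infty$. $\operatorname{inrad}(\mathcal V)$ is the supremum of radii $r$ of Hilbert balls $B(c,r)=\{x:d(c,x)\le r\}$, $c\in\mathbb{R}^n$, included in the tropical cone generated by $\mathcal V$, where $d(x,y)=\inf\{\lambda-\mu:\lambda,\mu\in\mathbb{R},\ \mu+y_j\le x_j\le\lambda+y_j\ \forall j\}$ is Hilbert's projective metric. $\mathcal H_a=\{y:\max_i(a_i+y_i)\text{ achieved at least twice}\}$; $S_i(a)=\{x: x_i+a_i\ge x_j+a_j\ \forall j\}$; $\operatorname{dist}_H(x,B)=\inf_{y\in B}d(x,y)$, $\operatorname{dist}_H(A,B)=\sup_{x\in A}\operatorname{dist}_H(x,B)$. *)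

(* R_max = \bar R restricted to values < +oo. *)
From HB Require Import structures.
From mathcomp Require Import all_boot all_order all_algebra.
From mathcomp Require Import boolp classical_sets reals constructive_ereal ereal.
Set Implicit Arguments. Unset Strict Implicit. Unset Printing Implicit Defensive.
Import Order.TTheory GRing.Theory Num.Theory.
Local Open Scope classical_set_scope.
Local Open Scope ereal_scope.

Section TropDefs.
Variables (R : realType) (n p : nat).

Definition rmax_elt (x : \bar R) : Prop := x != +oo.

Definition embv (c : 'I_n -> R) : 'I_n -> \bar R := fun j => (c j)%:E.

(* Hilbert's projective metric, inf over real lambda, mu (inf of empty = +oo) *)
Definition hilbert (x y : 'I_n -> \bar R) : \bar R :=
  ereal_inf [set e | exists lam mu : R,
    (forall j, (mu%:E + y j <= x j) /\ (x j <= lam%:E + y j)) /\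
    e = (lam - mu)%:E].

Definition trop_cone (V : 'I_n -> 'I_p -> \bar R) : set ('I_n -> \bar R) :=
  [set x | exists lam : 'I_p -> \bar R, (forall k, rmax_elt (lam k)) /\
      forall j, x j = \big[Order.max/-oo]_(k < p) (lam k + V j k)].

Definition hball (c : 'I_n -> R) (r : R) : set ('I_n -> R) :=
  [set x | hilbert (embv c) (embv x) <= r%:E].

Definition inrad (V : 'I_n -> 'I_p -> \bar R) : \bar R :=
  ereal_sup [set r%:E | r in [set r : R | (0 <= r)%R /\ exists c : 'I_n -> R,
      forall x, hball c r x -> trop_cone V (embv x)]].

Definition trop_hyp (a : 'I_n -> R) : set ('I_n -> \bar R) :=
  [set y | (forall j, rmax_elt (y j)) /\
     exists i1 i2 : 'I_n, i1 != i2 /\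
       (a i1)%:E + y i1 = \big[Order.max/-oo]_(j < n) ((a j)%:E + y j) /\
       (a i2)%:E + y i2 = \big[Order.max/-oo]_(j < n) ((a j)%:E + y j)].

Definition sector (a : 'I_n -> R) (i : 'I_n) : set ('I_n -> \bar R) :=
  [set x | forall j, x j + (a j)%:E <= x i + (a i)%:E].

Definition distH (x : 'I_n -> \bar R) (B : set ('I_n -> \bar R)) : \bar R :=
  ereal_inf [set hilbert x y | y in B].

Definition distH_set (A B : set ('I_n -> \bar R)) : \bar R :=
  ereal_sup [set distH x B | x in A].

Definition vcol (V : 'I_n -> 'I_p -> \bar R) (k : 'I_p) : 'I_n -> \bar R :=
  fun j => V j k.

Definition vcols (V : 'I_n -> 'I_p -> \bar R) : set ('I_n -> \bar R) :=
  [set vcol V k | k in [set: 'I_p]].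

Definition Top (V : 'I_n -> 'I_p -> \bar R) (x : 'I_n -> R) (i : 'I_n) : \bar R :=
  \big[Order.min/+oo]_(k < p | V i k != -oo)
     (- V i k + \big[Order.max/-oo]_(j < n | j != i) (V j k + (x j)%:E)).

Definition Tsig (V : 'I_n -> 'I_p -> \bar R) (sigma : 'I_n -> 'I_p)
    (x : 'I_n -> R) (i : 'I_n) : \bar R :=
  - V i (sigma i) + \big[Order.max/-oo]_(j < n | j != i) (V j (sigma i) + (x j)%:E).

End TropDefs.

From HB Require Import structures.
From mathcomp Require Import all_boot all_order all_algebra.
From mathcomp Require Import boolp classical_sets reals constructive_ereal ereal.
From mathcomp Require Import lra.
Set Implicit Arguments. Unset Strict Implicit. Unset Printing Implicit Defensive.
Import Order.TTheory GRing.Theory Num.Theory.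
Local Open Scope classical_set_scope.
Local Open Scope ereal_scope.

(* For v with v_i finite, call excess a v i = (v_i + a_i) - max_{j <> i} (v_j + a_j)
   the margin by which coordinate i wins in v + a.  Then T^sigma_i(a) is a_i minus
   the excess of column sigma(i) at i, so T(a) = a - inrad says that in every row i
   the largest excess of an admissible column equals inrad.  A vector lies in
   S_i(a) iff its excess at i is nonnegative, and then its Hilbert distance to H_a
   is exactly that excess: lowering v_i by the excess lands in H_a, and for any y
   in H_a the coordinate m <> i where y + a is maximal gives
   d(v, y) >= (v_i - y_i) - (v_m - y_m) >= excess.  Every column lies in the sector
   of its largest coordinate, hence dist_H(V, H_a) = inrad, and both sides of the
   equivalence say that column sigma(i) attains the maximal excess in row i. *)

Lemma bigmax_neqy (R : realType) (I : finType) (P : pred I) (F : I -> \bar R) :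
  (forall i, F i != +oo) -> \big[Order.max/-oo]_(i | P i) F i != +oo.
Proof.
move=> Fy; elim/big_ind: _ => // x y xy yy.
by rewrite /Order.max; case: ifP.
Qed.

Lemma ereal_sup_EFin_ge0 (R : realType) (S : set R) :
  (forall r, S r -> (0 <= r)%R) -> ereal_sup (EFin @` S) != -oo ->
  0 <= ereal_sup (EFin @` S).
Proof.
move=> S_ge0; have [[r Sr] _|/nonemptyPn->] := pselect (S !=set0).
  apply: (@le_trans _ _ r%:E); first by rewrite lee_fin; exact: S_ge0.
  by apply: ereal_sup_ubound; exists r.
by rewrite image_set0 ereal_sup0 eqxx.
Qed.

Lemma inrad_ge0 (R : realType) n p (V : 'I_n -> 'I_p -> \bar R) :
  inrad V != -oo -> 0 <= inrad V.
Proof. by apply: ereal_sup_EFin_ge0 => r []. Qed.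

Section Excess.
Variables (R : realType) (n : nat) (a : 'I_n -> R).

Definition excess (v : 'I_n -> \bar R) (i : 'I_n) : \bar R :=
  v i + (a i)%:E - \big[Order.max/-oo]_(j < n | j != i) (v j + (a j)%:E).

Variable v : 'I_n -> \bar R.
Hypothesis v_rmax : forall j, rmax_elt (v j).

Let shifted_neqy j : v j + (a j)%:E != +oo.
Proof. by move: (v_rmax j); case: (v j). Qed.

Lemma exists_sector : (exists j, v j != -oo) ->
  exists2 i, v i \is a fin_num & sector a i v.
Proof.
move=> [j1 vj1].
have [i _ Ei] := @eq_bigmax _ _ _ -oo j1 xpredT (fun j => (v j + (a j)%:E)%E)
  isT (fun _ _ => leNye _).
have vmax j : v j + (a j)%:E <= v i + (a i)%:E.
  by rewrite -Ei; exact: (le_bigmax _ (fun j => (v j + (a j)%:E)%E)).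
exists i => //; rewrite fin_numE v_rmax andbT.
apply: contraNneq vj1 => viNy; move: (vmax j1); rewrite viNy addNye leeNy_eq.
by move: (v_rmax j1); case: (v j1).
Qed.

Variable i : 'I_n.
Hypothesis vi_fin : v i \is a fin_num.

Let others_neqy :
  \big[Order.max/-oo]_(j < n | j != i) (v j + (a j)%:E) != +oo.
Proof. exact: bigmax_neqy shifted_neqy. Qed.

Let vai_fin : v i + (a i)%:E \is a fin_num.
Proof. by rewrite fin_numD vi_fin. Qed.

Lemma excess_neqNy : excess v i != -oo.
Proof.
rewrite /excess; move: others_neqy vai_fin.
by case: (\big[_/_]_(_ | _) _) => // [m|] _; case: (v i + _).
Qed.

Lemma oppe_excessD : - excess v i + (a i)%:E =
  - v i + \big[Order.max/-oo]_(j < n | j != i) (v j + (a j)%:E).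
Proof.
move: others_neqy; rewrite /excess.
have [r ->] : exists r, v i = r%:E by apply/EFin_fin_numP.
by case: (\big[_/_]_(_ | _) _) => [m| |] //= _; congr EFin; lra.
Qed.

Lemma sectorE : sector a i v <-> 0 <= excess v i.
Proof.
rewrite /excess subre_ge0 //; split => [vmax|Mle j].
  by apply: bigmax_le => [|j _]; [exact: leNye|exact: vmax].
have [->|ji] := eqVneq j i; first exact: lexx.
by apply: le_trans Mle; exact: (le_bigmax_cond _ (fun j => (v j + (a j)%:E)%E) ji).
Qed.

Lemma excess_le_hilbert y : trop_hyp a y -> excess v i <= hilbert v y.
Proof.
move=> [_ [i1 [i2 [i12 [E1 E2]]]]].
apply: le_ereal_inf_tmp => _ [lam [mu [vy ->]]].
set B := \big[Order.max/-oo]_(j < n) ((a j)%:E + y j) in E1 E2.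
have [m mi Em] : exists2 m, m != i & (a m)%:E + y m = B.
  by have [<-|] := eqVneq i1 i; [exists i2; rewrite 1?eq_sym|exists i1].
have ym_le : y m <= v m - mu%:E by rewrite leeBrDl //; exact: (vy m).1.
have vm_le : v m + (a m)%:E <= \big[Order.max/-oo]_(j < n | j != i) (v j + (a j)%:E).
  exact: (le_bigmax_cond _ (fun j => (v j + (a j)%:E)%E) mi).
rewrite /excess lee_subel_addr //.
apply: (le_trans (leeD2r _ (vy i).2)); rewrite -addeA [y i + _]addeC.
apply: (le_trans (leeD2l _ (le_bigmax -oo (fun j => ((a j)%:E + y j)%E) i))).
rewrite -/B -Em; apply: le_trans (leeD2l _ vm_le).
rewrite [(a m)%:E + _]addeC !addeA; apply: leeD2r.
apply: le_trans (leeD2l _ ym_le) _.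
by rewrite EFinB addeA addeAC.
Qed.

Lemma distH_le_excess : 0 <= excess v i -> distH v (trop_hyp a) <= excess v i.
Proof.
have [r vir] : exists r, v i = r%:E by apply/EFin_fin_numP.
move: others_neqy; rewrite /excess vir.
set M := \big[Order.max/-oo]_(j < n | j != i) _.
case EM : M => [m| |] // _; last by move=> _; exact: leey.
rewrite -EFinD lee_fin => g_ge0.
have [j2 j2i Ej2] : exists2 j2, j2 != i & M = v j2 + (a j2)%:E.
  case: (pickP (fun j => j != i)) => [j ji|none]; last by move: EM; rewrite /M big_pred0.
  have [j2 j2i Ej2] := @eq_bigmax _ _ _ -oo j (fun j => j != i)
    (fun j => (v j + (a j)%:E)%E) ji (fun _ _ => leNye _).
  by exists j2.
pose y j := if j == i then (m - a i)%:E else v j.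
have y_max : \big[Order.max/-oo]_(j < n) ((a j)%:E + y j) = m%:E.
  rewrite (bigD1 i) //= /y eqxx -EFinD subrKC.
  rewrite (eq_bigr (fun j => v j + (a j)%:E)); last by move=> j /negPf ->; rewrite addeC.
  by rewrite -/M EM maxxx.
have y_hyp : trop_hyp a y.
  split=> [j|]; first by rewrite /rmax_elt /y; case: ifP => // _; exact: v_rmax.
  exists i, j2; split; first by rewrite eq_sym.
  rewrite y_max /y eqxx (negPf j2i) -EFinD subrKC addeC -Ej2 EM.
  by split.
apply: (@le_trans _ _ (hilbert v y)); first by apply: ereal_inf_lbound; exists y.
rewrite -[X in _ <= X%:E]subr0.
apply: ereal_inf_lbound; exists (r + a i - m)%R, 0%R; split => // j.
rewrite /y add0e; case: eqP => [->|_]; last by split => //; exact: leeDr.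
by rewrite vir -EFinD !lee_fin; split; lra.
Qed.

Lemma distH_sector : sector a i v -> distH v (trop_hyp a) = excess v i.
Proof.
move=> /sectorE excess_ge0; apply/eqP; rewrite eq_le distH_le_excess //=.
by apply: le_ereal_inf_tmp => _ [y /excess_le_hilbert ? <-].
Qed.

End Excess.

Section Operators.
Variables (R : realType) (n p : nat) (V : 'I_n -> 'I_p -> \bar R) (a : 'I_n -> R).
Hypothesis V_rmax : forall i k, rmax_elt (V i k).
Hypothesis V_col : forall k, exists i, V i k != -oo.
Hypothesis V_row : forall i, exists k, V i k != -oo.
Hypothesis Ta : forall i, Top V a i = - inrad V + (a i)%:E.

Let V_fin i k : V i k != -oo -> V i k \is a fin_num.
Proof. by rewrite fin_numE V_rmax andbT. Qed.

Lemma Tsig_excess sigma i : V i (sigma i) != -oo ->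
  Tsig V sigma a i = - excess a (vcol V (sigma i)) i + (a i)%:E.
Proof. by move=> Vfin; rewrite (oppe_excessD a (V_rmax ^~ (sigma i)) (V_fin Vfin)). Qed.

Lemma Top_eq_TsigE sigma i : V i (sigma i) != -oo ->
  Top V a i = Tsig V sigma a i <-> excess a (vcol V (sigma i)) i = inrad V.
Proof.
move=> Vfin; rewrite Ta Tsig_excess //; split=> [|->//].
by move/(congr1 (fun x => x - (a i)%:E)); rewrite !addeK // => /oppe_inj.
Qed.

Lemma excess_le_inrad i k : V i k != -oo -> excess a (vcol V k) i <= inrad V.
Proof.
move=> Vik.
have : Top V a i <= Tsig V (fun=> k) a i.
  exact: (bigmin_le_cond _ (fun k => Tsig V (fun=> k) a i) Vik).
by rewrite Ta Tsig_excess // leeD2rE // leeN2.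
Qed.

Lemma exists_excess_eq_inrad i :
  exists2 k, V i k != -oo & excess a (vcol V k) i = inrad V.
Proof.
have [k0 Vik0] := V_row i.
have [k Vik Ek] := eq_bigmin k0 (fun k => V i k != -oo)
  (fun k => Tsig V (fun=> k) a i) Vik0 (fun _ _ => leey _).
by exists k => //; apply/(@Top_eq_TsigE (fun=> k) i Vik).
Qed.

Lemma inrad_ge0_eigen (i : 'I_n) : 0 <= inrad V.
Proof.
apply: inrad_ge0; have [k Vik <-] := exists_excess_eq_inrad i.
exact: (excess_neqNy a (V_rmax ^~ k) (V_fin Vik)).
Qed.

Lemma distH_cols_eq_inrad (i : 'I_n) :
  distH_set (vcols V) (trop_hyp a) = inrad V.
Proof.
apply/eqP; rewrite eq_le; apply/andP; split.
  apply: ge_ereal_sup => _ [_ [k _ <-] <-].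
  have [j Vjk_fin Hs] := exists_sector a (V_rmax ^~ k) (V_col k).
  rewrite (distH_sector (V_rmax ^~ k) Vjk_fin Hs); apply: excess_le_inrad.
  by move: Vjk_fin; rewrite fin_numE => /andP[].
have [k Vik Ek] := exists_excess_eq_inrad i.
apply: ereal_sup_ubound; exists (vcol V k); first by exists k.
have Vik_fin := V_fin Vik.
have Hs : sector a i (vcol V k).
  by apply/(sectorE a Vik_fin); rewrite Ek; exact: inrad_ge0_eigen i.
by rewrite (distH_sector (V_rmax ^~ k) Vik_fin Hs).
Qed.

End Operators.

Theorem proposition4p10 (R : realType) (n p : nat)
  (V : 'I_n -> 'I_p -> \bar R)
  (HVmax : forall i k, rmax_elt (V i k))
  (Hcol : forall k : 'I_p, exists i : 'I_n, V i k != -oo)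
  (Hrow : forall i : 'I_n, exists k : 'I_p, V i k != -oo)
  (a : 'I_n -> R)
  (Ha : forall i, Top V a i = - inrad V + (a i)%:E)
  (sigma : 'I_n -> 'I_p)
  (Hsigma : forall i, V i (sigma i) != -oo) :
  (forall i, Top V a i = Tsig V sigma a i) <->
  (forall i, sector a i (vcol V (sigma i)) /\
     distH (vcol V (sigma i)) (trop_hyp a) = distH_set (vcols V) (trop_hyp a)).
Proof.
have col_fin i : vcol V (sigma i) i \is a fin_num.
  by rewrite fin_numE Hsigma HVmax.
have dist_cols i := distH_cols_eq_inrad HVmax Hcol Hrow Ha i.
split=> [Teq i | Hsec i].
- have /(Top_eq_TsigE HVmax Ha (Hsigma i)) E := Teq i.
  have Hs : sector a i (vcol V (sigma i)).
    by apply/(sectorE a (col_fin i)); rewrite E; exact: inrad_ge0_eigen HVmax Hrow Ha i.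
  by split => //; rewrite (distH_sector (HVmax ^~ _) (col_fin i) Hs) E dist_cols.
- have [Hs Hd] := Hsec i.
  apply/(Top_eq_TsigE HVmax Ha (Hsigma i)).
  by rewrite -(distH_sector (HVmax ^~ _) (col_fin i) Hs) Hd dist_cols.
Qed.
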